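(* Tangle learning, i.e. the algorithm $\mathtt{solve}$ (defined in the context), runs in time $O(dnm\lvert T\rvert+dn^2\lvert T\rvert^2)$ on a parity game with $d$ priorities, $n$ vertices and $m$ edges, where $\lvert T\rvert$ is the number of learned tangles.
   Context: Parity games: $\mathcal{G}=(V_0,V_1,E,\mathrm{pr})$, $V=V_0\cup V_1$ finite, partitioned into vertices of Even ($0$) and Odd ($1$); $E\subseteq V\times V$ with every vertex having a successor; $\mathrm{pr}:V\to\{0,\dots,d\}$. $E(u)=\{v:(u,v)\in E\}$, $\mathrm{pr}(U)=\max_{u\in U}\mathrm{pr}(u)$, $\mathrm{pr}^{-1}(p)$ the set of vertices of priority $p$, $\overline{\alpha}=1-\alpha$. A cycle is won by $\alpha$ if its highest priority has parity $\alpha$. A strategy of $\alpha$ is a partial function $\sigma$ on $V_\alpha$ with $\sigma(v)\in E(v)$. For $U\subseteq V$, $\mathcal{G}\setminus U$ is the subgame with vertices $V\setminus U$ and edges $E\cap((V\setminus U)\times(V\setminus U))$. A $p$-tangle is a nonempty $U\subseteq V$ with $p=\mathrm{pr}(U)$ such that for $\alpha\equiv p\pmod 2$ there is a strategy $\sigma:U\cap V_\alpha\to U$ (witness strategy $\sigma_T(U)$) with $(U,E\cap(\sigma\cup((U\cap V_{\overline{\alpha}})\times U)))$ strongly connected and all its cycles won by $\alpha$. For a tangle $t$ won by $\alpha$ in a game with edge set $E$, $E_T(t)=\{v\notin t:\exists u\in t\cap V_{\overline{\alpha}},(u,v)\in E\}$; $T_\alpha$ denotes the tangles of $T$ won by $\alpha$;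 for a subgame $\mathcal{G}'$, $T\cap\mathcal{G}'$ denotes the tangles of $T$ contained in its vertex set. Standard attractor $\mathit{Attr}^{\mathcal{G}}_\alpha(A)$: least $Z\supseteq A$ containing every $v\in V_\alpha$ with $E(v)\cap Z\neq\emptyset$ and every $v\in V_{\overline{\alpha}}$ with $E(v)\subseteq Z$, with a strategy mapping attracted $\alpha$-vertices into $Z$. Tangle attractor $\mathit{TAttr}^{\mathcal{G},T}_\alpha(A)$: least $Z\supseteq A$ closed under these rules and containing every vertex of every $t\in T_\alpha$ with $\emptyset\neq E_T(t)\subseteq Z$; its strategy additionally gives $\alpha$-vertices of an attracted tangle $t$ not yet having a strategy their value under $\sigma_T(t)$. extract-tangles$(Z,\sigma)$, for a subgame $\mathcal{G}'=(V',E')$ with top priority $p$, $\alpha\equiv p$, region $Z$ and strategy $\sigma$: let $Y_Z$ be the greatest $X\subseteq Z$ with every $v\in X\cap V_{\overline{\alpha}}$ having $E'(v)\subseteq X$ and every $v\in X\cap V_\alpha$ having $\sigma(v)\in X$; return the bottom strongly connected components containing at least one edge of the graph on $Y_Z$ with edges $(v,\sigma(v))$ for $v\in Y_Z\cap V_\alpha$ and $E'$-edges from $v\in Y_Z\cap V_{\overline{\alpha}}$; these are the learned tangles. $\mathtt{search}(\mathcal{G},T)$: repeat forever: $r:=\emptyset$, $Y:=\emptyset$; while $V\setminus\mathrm{dom}(r)\neq\emptyset$: $\mathcal{G}':=\mathcal{G}\setminus\mathrm{dom}(r)$, $T':=T\cap\mathcal{G}'$, $p:=\mathrm{pr}(\mathcal{G}')$,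 $\alpha:=p\bmod 2$, $(Z,\sigma):=\mathit{TAttr}^{\mathcal{G}',T'}_\alpha(\mathrm{pr}^{-1}(p)\cap V')$, $A:=$ extract-tangles$(Z,\sigma)$; if some $t\in A$ has $E_T(t)=\emptyset$ in $\mathcal{G}$, return $(T\cup Y,t)$; else $r(v):=p$ for $v\in Z$, $Y:=Y\cup A$. After the while-loop, $T:=T\cup Y$. $\mathtt{solve}(\mathcal{G})$: $W_0=W_1=\emptyset$, $\sigma_0=\sigma_1=\emptyset$, $T=\emptyset$; while $\mathcal{G}$ has a vertex: $(T,d):=\mathtt{search}(\mathcal{G},T)$; $\alpha:=\mathrm{pr}(d)\bmod 2$; $(D,\sigma):=\mathit{Attr}^{\mathcal{G}}_\alpha(d)$; $W_\alpha:=W_\alpha\cup D$; $\sigma_\alpha:=\sigma_\alpha\cup\sigma_T(d)\cup\sigma$; $\mathcal{G}:=\mathcal{G}\setminus D$; $T:=$ tangles of $T$ inside the remaining vertex set. Return $W_0,W_1,\sigma_0,\sigma_1$. *)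

From mathcomp Require Import all_boot.
Set Implicit Arguments. Unset Strict Implicit. Unset Printing Implicit Defensive.

(* A parity game on the finite vertex type V.  [owner v = false] : v is a
   vertex of Even (V_0); [owner v = true] : v is a vertex of Odd (V_1).
   Player alpha is represented by a bool, alpha = odd p for priority p. *)
Record game (V : finType) := Game {
  owner : V -> bool;
  edge  : rel V;
  prio  : V -> nat }.

Definition game_total (V : finType) (G : game V) := forall v, exists w, edge G v w.

Definition strat (V : finType) := V -> option V.

Section TangleLearning.
Variables (V : finType) (G : game V).
(* Choice oracles resolving the nondeterminism of the algorithm:
   [ch v S] is the successor chosen for v among the candidates S,
   [chT D] is the dominion chosen among the candidates D. *)
Variable ch : V -> {set V} -> V.
Variable chT : {set {set V}} -> {set V}.

(* A subgame is given by its vertex set W (edges: E restricted to W x W). *)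
Definition succ (W : {set V}) (v : V) : {set V} := [set w in W | edge G v w].
Definition nedges (W : {set V}) : nat :=
  #|[set p : V * V | (p.1 \in W) && (p.2 \in W) && edge G p.1 p.2]|.
Definition maxpr (U : {set V}) : nat := \max_(v in U) prio G v.

Definition escapes (W t : {set V}) : {set V} :=
  [set v in W | (v \notin t) &&
     [exists u in t, (owner G u != odd (maxpr t)) && edge G u v]].

Definition attr_std (a : bool) (W Z : {set V}) : {set V} :=
  [set v in W | (v \notin Z) &&
     (if owner G v == a then succ W v :&: Z != set0 else succ W v \subset Z)].

Definition attr_tang (a : bool) (W : {set V}) (Tp : {set {set V}}) (Z : {set V})
  : {set {set V}} :=
  [set t in Tp | [&& odd (maxpr t) == a, escapes W t != set0 &
                     escapes W t \subset Z]].

Definition tattr_step (a : bool) (W : {set V}) (Tp : {set {set V}})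
  (wit : {set V} -> strat V) (p : {set V} * strat V) : {set V} * strat V :=
  let: (Z, s) := p in
  let N := attr_std a W Z in
  let Ts := attr_tang a W Tp Z in
  (Z :|: N :|: \bigcup_(t in Ts) t,
   fun v => if s v is Some w then Some w else
            if owner G v != a then None else
            if v \in N then Some (ch v (succ W v :&: Z)) else
            obind (fun t => wit t v) [pick t in Ts | v \in t]).

(* TAttr^{W,Tp}_a(A): iterate to the least fixpoint (|V| rounds suffice);
   attracted alpha-vertices map to previously attracted vertices, attracted
   tangles' alpha-vertices without a strategy get the witness strategy. *)
Definition tattr (a : bool) (W : {set V}) (Tp : {set {set V}})
  (wit : {set V} -> strat V) (A : {set V}) : {set V} * strat V :=
  let: (Z, s) := iter #|V| (tattr_step a W Tp wit) (A, fun _ => None) in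
  (Z, fun v => if s v is Some w then Some w else
               if (v \in A) && (owner G v == a) && (succ W v :&: Z != set0)
               then Some (ch v (succ W v :&: Z)) else None).

Definition ygfp (a : bool) (W Z : {set V}) (s : strat V) : {set V} :=
  iter #|V| (fun X : {set V} => [set v in X | if owner G v == a
                                    then (if s v is Some w then w \in X else false)
                                    else succ W v \subset X]) Z.

Definition egraph (a : bool) (W Y : {set V}) (s : strat V) : rel V :=
  fun u w => [&& u \in Y, w \in Y &
               if owner G u == a then s u == Some w else edge G u w && (w \in W)].

Definition scc (g : rel V) (u : V) : {set V} := [set w | connect g u w && connect g w u].

Definition extract (a : bool) (W Z : {set V}) (s : strat V) : {set {set V}} :=
  let Y := ygfp a W Z s in
  let g := egraph a W Y s in
  [set C : {set V} | [&& [exists u in Y, C == scc g u],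
                         [forall x in C, forall y, g x y ==> (y \in C)] &
                         [exists x in C, exists y, g x y]]].

(* ---------- cost model (charges of a standard linear-size implementation) ---------- *)
Definition tattr_cost (W : {set V}) (Tp : {set {set V}}) : nat :=
  #|W| + nedges W + \sum_(t in Tp) (#|t| + \sum_(u in t) #|succ W u|).
Definition extract_cost (W : {set V}) : nat := #|W| + nedges W.
Definition esc_cost (Wg : {set V}) (A : {set {set V}}) : nat :=
  \sum_(t in A) (#|t| + \sum_(u in t) #|succ Wg u|).
Definition merge_cost (Y : {set {set V}}) : nat := \sum_(t in Y) #|t|.

Definition upd_wit (wit : {set V} -> strat V) (A : {set {set V}}) (s : strat V)
  : {set V} -> strat V := fun t => if t \in A then s else wit t.

Inductive sres :=
| SDom of {set {set V}} & ({set V} -> strat V) & {set V} & nat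
| SDone of {set {set V}} & ({set V} -> strat V) & nat.

(* the inner while-loop; dom = dom(r) *)
Fixpoint sweep (k : nat) (Wg : {set V}) (T : {set {set V}}) (wit : {set V} -> strat V)
  (dom : {set V}) (Y : {set {set V}}) (witY : {set V} -> strat V) (c : nat)
  : option sres :=
  if Wg :\: dom == set0 then Some (SDone Y witY c) else
  match k with
  | 0 => None
  | k'.+1 =>
    let W' := Wg :\: dom in
    let T' := [set t in T | t \subset W'] in
    let p := maxpr W' in
    let a := odd p in
    let A0 := [set v in W' | prio G v == p] in
    let: (Z, s) := tattr a W' T' wit A0 in
    let A := extract a W' Z s in
    let c' := c + tattr_cost W' T' + extract_cost W' + esc_cost Wg A in
    let D := [set t in A | escapes Wg t == set0] in
    if D != set0 then Some (SDom Y witY (chT D) c')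
    else sweep k' Wg T wit (dom :|: Z) (Y :|: A) (upd_wit witY A s) c'
  end.

Definition merge (T : {set {set V}}) (wit : {set V} -> strat V)
  (Y : {set {set V}}) (witY : {set V} -> strat V) :=
  (T :|: Y, fun t => if t \in T then wit t else witY t).

(* search(G,T): returns new T, witnesses, dominion, accumulated cost,
   accumulated set of all learned tangles *)
Fixpoint search (k : nat) (Wg : {set V}) (T : {set {set V}}) (wit : {set V} -> strat V)
  (c : nat) (learned : {set {set V}})
  : option ({set {set V}} * ({set V} -> strat V) * {set V} * nat * {set {set V}}) :=
  match k with
  | 0 => None
  | k'.+1 =>
    match sweep k Wg T wit set0 set0 (fun _ _ => None) 0 with
    | None => None
    | Some (SDom Y witY t c1) =>
        let: (T2, wit2) := merge T wit Y witY in
        Some (T2, wit2, t, c + c1 + merge_cost Y, learned :|: Y)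
    | Some (SDone Y witY c1) =>
        let: (T2, wit2) := merge T wit Y witY in
        search k' Wg T2 wit2 (c + c1 + merge_cost Y) (learned :|: Y)
    end
  end.

(* returns (total cost, set of all learned tangles) *)
Fixpoint solve_loop (k : nat) (Wg : {set V}) (T : {set {set V}})
  (wit : {set V} -> strat V) (c : nat) (learned : {set {set V}})
  : option (nat * {set {set V}}) :=
  if Wg == set0 then Some (c, learned) else
  match k with
  | 0 => None
  | k'.+1 =>
    match search k Wg T wit c learned with
    | None => None
    | Some (T1, wit1, dm, c1, l1) =>
        let a := odd (maxpr dm) in
        let D := (tattr a Wg set0 wit1 dm).1 in
        let Wg' := Wg :\: D in
        let c2 := c1 + #|Wg| + nedges Wg + merge_cost T1 in
        solve_loop k' Wg' [set t in T1 | t \subset Wg'] wit1 c2 l1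
    end
  end.

Definition solve (k : nat) : option (nat * {set {set V}}) :=
  solve_loop k setT set0 (fun _ _ => None) 0 set0.

End TangleLearning.

(* A sweep of [search] attracts a region of the remaining subgame for each top
   priority in turn, so it has at most d rounds.  A round costs O(|T| (n + m)):
   the tangle attractor looks at each known tangle once, and the extracted
   tangles are disjoint.  A sweep that finds no dominion learns a tangle that was
   not known: its last round attracts everything that remains, so a bottom SCC is
   extracted, while a known tangle whose escapes all lie in removed regions has
   no escapes at all, since it would otherwise have been attracted together with
   its escapes.  Hence each call of [search] makes at most one sweep more than
   the number of tangles it learns, and [solve] calls [search] at most n times
   because every dominion is nonempty.  With at most |T| + n sweeps of cost
   O(d |T| (n + m)) each, and n <= m <= n^2, the bound follows. *)

From Pilot Require Import Defs.
From mathcomp Require Import all_boot zify.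
Set Implicit Arguments. Unset Strict Implicit. Unset Printing Implicit Defensive.

Lemma ohead_filter_cross (T : eqType) (s : seq T) (P Q : pred T) x y :
  ohead (filter P s) = Some x -> ohead (filter Q s) = Some y -> P y -> Q x -> x = y.
Proof.
elim: s => [//|z s IHs] /=.
case Pz: (P z); case Qz: (Q z) => /=.
- by move=> [<-] [<-].
- by move=> [<-] _ _; rewrite Qz.
- by move=> _ [<-]; rewrite Pz.
- exact: IHs.
Qed.

Lemma pick_cross (T : finType) (P Q : pred T) x y :
  pick P = Some x -> pick Q = Some y -> P y -> Q x -> x = y.
Proof. by rewrite /pick /enum_mem => hx hy Py Qx; apply: (ohead_filter_cross hx hy). Qed.

Lemma pick_someP (T : finType) (P : pred T) x : pick P = Some x -> P x.
Proof. by case: pickP => // y Py [<-]. Qed.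

Lemma connect_invariant (T : finType) (e : rel T) (P : pred T) x y :
  (forall u v, P u -> e u v -> P v) -> connect e x y -> P x -> P y.
Proof.
move=> inv /connectP[p + ->]; elim: p x => [//|z p IHp] x /= /andP[exz pth] Px.
exact: IHp pth (inv _ _ Px exz).
Qed.

Lemma iter_extensive_fixed (T : finType) (F : {set T} -> {set T}) (X0 : {set T}) :
  (forall X : {set T}, X \subset F X) -> F (iter #|T| F X0) = iter #|T| F X0.
Proof.
move=> ext.
have grow i : F (iter i F X0) = iter i F X0 \/ i <= #|iter i F X0|.
  elim: i => [|i [fix_i|le_i]]; [by right | by left; rewrite /= fix_i |].
  have [fix_i|nfix] := eqVneq (F (iter i F X0)) (iter i F X0).
    by left; rewrite /= fix_i.
  by right; apply: leq_ltn_trans le_i (proper_card _); rewrite properEneq eq_sym nfix ext.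
case: (grow #|T|) => // full.
have -> : iter #|T| F X0 = setT by apply/eqP; rewrite eqEcard subsetT cardsT.
by apply/eqP; rewrite eqEsubset subsetT ext.
Qed.

Lemma iter_reductive_fixed (T : finType) (F : {set T} -> {set T}) (X0 : {set T}) :
  (forall X : {set T}, F X \subset X) -> F (iter #|T| F X0) = iter #|T| F X0.
Proof.
move=> red.
have iterC i : iter i (funsetC F) (~: X0) = ~: iter i F X0.
  by elim: i => //= i ->; rewrite /funsetC setCK.
have ext (X : {set T}) : X \subset funsetC F X by rewrite /funsetC subsetC red.
by have := iter_extensive_fixed (~: X0) ext; rewrite iterC /funsetC setCK => /setC_inj.
Qed.

Lemma scc_mem_eq (T : finType) (e : rel T) u x : x \in scc e u -> scc e u = scc e x.
Proof.
rewrite inE => /andP[ux xu]; apply/setP=> w; rewrite !inE.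
by apply/andP/andP=> -[h1 h2]; split; apply: connect_trans; eassumption.
Qed.

Lemma bottom_scc_exists (T : finType) (e : rel T) (Y : {set T}) u0 :
  u0 \in Y -> (forall x y, x \in Y -> e x y -> y \in Y) ->
  exists2 u, u \in Y & forall w, connect e u w -> connect e w u.
Proof.
move=> u0Y eY; pose reach u := [set w | connect e u w].
have [u uY umin] := arg_minnP (fun u => #|reach u|) u0Y.
exists u => // w uw.
have wY : w \in Y := connect_invariant eY uw uY.
have sub : reach w \subset reach u.
  by apply/subsetP=> z; rewrite !inE; apply: connect_trans.
have := umin w wY; rewrite (geq_leqif (subset_leqif_card sub)) => /subsetP/(_ u).
by rewrite !inE connect0 => /(_ isT).
Qed.

(** * Tangle attractor and tangle extraction *)

Section TangleAttractor.
Variables (V : finType) (G : game V) (ch : V -> {set V} -> V).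
Hypothesis chP : forall v S, S != set0 -> ch v S \in S.

Definition subgame_total (W : {set V}) := forall v, v \in W -> succ G W v != set0.

Definition tangle_graph (t : {set V}) (w : strat V) : rel V := fun x y =>
  [&& x \in t, y \in t &
      if owner G x == odd (maxpr G t) then w x == Some y else edge G x y].

(* A tangle without the winning condition on its cycles, on which the running
   time does not depend. *)
Definition weak_tangle (t : {set V}) (w : strat V) :=
  [/\ t != set0,
      forall v, v \in t -> owner G v == odd (maxpr G t) -> exists2 y, w v = Some y & y \in t &
      forall (S : {set V}) v, v \in t -> v \in S ->
         (forall x y, x \in S -> tangle_graph t w x y -> y \in S) -> t \subset S].

Lemma maxpr_ge (W : {set V}) v : v \in W -> prio G v <= maxpr G W.
Proof. exact: leq_bigmax_cond. Qed.

Lemma maxpr_attained (W : {set V}) : W != set0 -> exists2 v, v \in W & prio G v = maxpr G W.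
Proof.
rewrite /maxpr -card_gt0 => W_gt0.
by have [v vW ->] := eq_bigmax_cond (prio G) W_gt0; exists v.
Qed.

Lemma maxpr_eq (C : {set V}) v :
  v \in C -> (forall w, w \in C -> prio G w <= prio G v) -> maxpr G C = prio G v.
Proof. by move=> vC le_v; apply/eqP; rewrite eqn_leq maxpr_ge // andbT; apply/bigmax_leqP. Qed.

Variables (a : bool) (W : {set V}) (Tp : {set {set V}}) (wit : {set V} -> strat V).
Variable A : {set V}.
Hypothesis TpW : forall t, t \in Tp -> t \subset W.
Hypothesis AW : A \subset W.
Hypothesis Tp_weak : forall t, t \in Tp -> weak_tangle t (wit t).

Definition attr_round (Z : {set V}) :=
  Z :|: attr_std G a W Z :|: \bigcup_(t in attr_tang G a W Tp Z) t.

Definition attr_iter i := iter i (tattr_step G ch a W Tp wit) (A, fun _ => None).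

Definition attr_region := (tattr G ch a W Tp wit A).1.
Definition attr_strategy := (tattr G ch a W Tp wit A).2.

Lemma tattrE : tattr G ch a W Tp wit A = (attr_region, attr_strategy).
Proof. by rewrite /attr_region /attr_strategy; case: tattr. Qed.

Lemma attr_iter_region i : (attr_iter i).1 = iter i attr_round A.
Proof. by elim: i => [//|i IHi]; rewrite /= -IHi; case: (attr_iter i). Qed.

Lemma attr_iter_regionS i : (attr_iter i.+1).1 = attr_round (attr_iter i).1.
Proof. by rewrite !attr_iter_region. Qed.

Lemma attr_iter_strategyS i v : (attr_iter i.+1).2 v =
  if (attr_iter i).2 v is Some w then Some w else
  if owner G v != a then None else
  if v \in attr_std G a W (attr_iter i).1 then Some (ch v (succ G W v :&: (attr_iter i).1))
  else obind (fun t => wit t v) [pick t in attr_tang G a W Tp (attr_iter i).1 | v \in t].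
Proof. by rewrite [attr_iter _]iterS -/(attr_iter i); case: (attr_iter i). Qed.

Lemma attr_regionE : attr_region = (attr_iter #|V|).1.
Proof. by rewrite /attr_region /tattr -/(attr_iter #|V|); case: (attr_iter #|V|). Qed.

Lemma attr_strategyE v : attr_strategy v =
  if (attr_iter #|V|).2 v is Some w then Some w else
  if (v \in A) && (owner G v == a) && (succ G W v :&: attr_region != set0)
  then Some (ch v (succ G W v :&: attr_region)) else None.
Proof.
by rewrite attr_regionE /attr_strategy /tattr -/(attr_iter #|V|); case: (attr_iter #|V|).
Qed.

Lemma attr_round_ext (Z : {set V}) : Z \subset attr_round Z.
Proof. by rewrite /attr_round -setUA subsetUl. Qed.

Lemma attr_round_sub (Z : {set V}) : Z \subset W -> attr_round Z \subset W.
Proof.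
move=> ZW; rewrite /attr_round !subUset ZW /=; apply/andP; split.
  by apply/subsetP=> v; rewrite inE => /andP[].
by apply/bigcupsP=> t; rewrite inE => /andP[/TpW].
Qed.

Lemma attr_iter_mono i j : i <= j -> (attr_iter i).1 \subset (attr_iter j).1.
Proof.
move=> /subnK <-; elim: (j - i) => [|k IHk] //.
by apply: subset_trans IHk _; rewrite addSn attr_iter_regionS attr_round_ext.
Qed.

Lemma attr_iter_strategy_mono i j v w :
  i <= j -> (attr_iter i).2 v = Some w -> (attr_iter j).2 v = Some w.
Proof.
move=> /subnK <-; elim: (j - i) => [//|k IHk] vw.
by rewrite addSn attr_iter_strategyS (IHk vw).
Qed.

Lemma attr_iter_dom i v : (attr_iter i).2 v != None -> v \in (attr_iter i).1.
Proof.
elim: i v => [//|i IHi] v; rewrite attr_iter_strategyS.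
case E: ((attr_iter i).2 v) => [w|].
  by move=> _; apply: (subsetP (attr_iter_mono (leqnSn i))); apply: IHi; rewrite E.
case: (owner G v != a) => //; rewrite attr_iter_regionS /attr_round.
case: ifP => [vN _|_]; first by apply/setUP; left; apply/setUP; right.
case: pickP => [t /andP[tT vt]|] //= _.
by apply/setUP; right; apply/bigcupP; exists t.
Qed.

Lemma attr_iter_undef i v : v \notin (attr_iter i).1 -> (attr_iter i).2 v = None.
Proof. by apply: contraNeq => /attr_iter_dom. Qed.

Lemma attr_region_fixed : attr_round attr_region = attr_region.
Proof. by rewrite attr_regionE attr_iter_region; apply: iter_extensive_fixed attr_round_ext. Qed.

Lemma attr_region_sub : attr_region \subset W.
Proof. by rewrite attr_regionE attr_iter_region; elim: #|V| => //= i; apply: attr_round_sub. Qed.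

Lemma attr_region_top : A \subset attr_region.
Proof. by rewrite attr_regionE; apply: (attr_iter_mono (leq0n _)). Qed.

Lemma attr_compl_lt : A != set0 -> #|W :\: attr_region| < #|W|.
Proof.
move=> /set0Pn[v vA]; rewrite proper_card // properEneq subsetDl andbT.
by apply/eqP=> /setP/(_ v); rewrite in_setD (subsetP attr_region_top v vA) (subsetP AW v vA).
Qed.

Lemma attr_strategy_mono i v w :
  i <= #|V| -> (attr_iter i).2 v = Some w -> attr_strategy v = Some w.
Proof. by move=> le_i vw; rewrite attr_strategyE (attr_iter_strategy_mono le_i vw). Qed.

Lemma attr_region_std v : v \in W -> v \notin attr_region ->
  if owner G v == a then succ G W v :&: attr_region == set0
  else ~~ (succ G W v \subset attr_region).
Proof.
move=> vW vZ; have: v \notin attr_std G a W attr_region.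
  by apply: contra vZ => vN; rewrite -attr_region_fixed; apply/setUP; left; apply/setUP; right.
by rewrite inE vW vZ /=; case: (owner G v == a) => //; move/negPn.
Qed.

Lemma attr_region_tangle t : t \in Tp -> odd (maxpr G t) == a ->
  escapes G W t != set0 -> escapes G W t \subset attr_region -> t \subset attr_region.
Proof.
move=> tT odt ne sub; rewrite -attr_region_fixed /attr_round.
apply/subsetP=> v vt; apply/setUP; right; apply/bigcupP; exists t => //.
by rewrite inE tT odt ne sub.
Qed.

(* Vertices of [A] only receive their move in the final step of [tattr]. *)
Lemma attr_iter_strategy i v : v \in (attr_iter i).1 -> owner G v == a ->
  (exists2 w, (attr_iter i).2 v = Some w & w \in (attr_iter i).1) \/
  (v \in A /\ (attr_iter i).2 v = None).
Proof.
elim: i v => [|i IHi] v; first by right.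
move=> vZ ova; have sub := attr_iter_mono (leqnSn i).
rewrite attr_iter_strategyS.
case E: ((attr_iter i).2 v) => [w|].
  have vZi : v \in (attr_iter i).1 by apply: attr_iter_dom; rewrite E.
  case: (IHi v vZi ova) => [[w' E' w'Z]|[_ E']]; rewrite E' in E; last by [].
  by case: E => <-; left; exists w'; last exact: (subsetP sub).
rewrite ova /=.
case: ifP => [vN|vN].
  left; eexists; first by [].
  move: vN; rewrite inE ova => /and3P[_ _ /(chP v)].
  by rewrite inE => /andP[_ /(subsetP sub)].
case: pickP => [t /andP[tT vt]|none] /=.
  move: (tT); rewrite inE => /and3P[tTp odt _].
  have [_ wit_closed _] := Tp_weak tTp.
  have [y -> yt] : exists2 y, wit t v = Some y & y \in t.
    by apply: wit_closed; rewrite // (eqP odt).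
  left; exists y => //; rewrite attr_iter_regionS /attr_round.
  by apply/setUP; right; apply/bigcupP; exists t.
right; split=> //.
move: vZ; rewrite attr_iter_regionS /attr_round => /setUP[/setUP[vZi|]|]; last 2 first.
- by rewrite vN.
- by case/bigcupP=> t tT vt; have := none t; rewrite tT vt.
by case: (IHi v vZi ova) => [[w' E']|[]//]; rewrite E' in E.
Qed.

Definition core_step (X : {set V}) : {set V} := [set v in X |
  if owner G v == a then (if attr_strategy v is Some w then w \in X else false)
  else succ G W v \subset X].

Definition core := ygfp G a W attr_region attr_strategy.

Lemma core_step_sub X : core_step X \subset X.
Proof. by apply/subsetP=> v; rewrite inE => /andP[]. Qed.

Lemma core_fixed : core_step core = core.
Proof. exact: iter_reductive_fixed core_step_sub. Qed.

Lemma core_sub : core \subset attr_region.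
Proof. by rewrite /core /ygfp; elim: #|V| => //= i; apply: subset_trans (core_step_sub _). Qed.

Lemma core_stable v : v \in core ->
  if owner G v == a then (if attr_strategy v is Some w then w \in core else false)
  else succ G W v \subset core.
Proof. by rewrite -{1}core_fixed inE => /andP[]. Qed.

Lemma core_alpha v : v \in core -> owner G v == a -> exists2 w, attr_strategy v = Some w & w \in core.
Proof. by move/core_stable=> + ova; rewrite ova; case: (attr_strategy v) => // w; exists w. Qed.

Lemma core_opp v : v \in core -> owner G v != a -> succ G W v \subset core.
Proof. by move/core_stable=> + /negbTE ova; rewrite ova. Qed.

Lemma core_greatest (X : {set V}) : X \subset attr_region -> X \subset core_step X -> X \subset core.
Proof.
move=> XZ XF; rewrite /core /ygfp; elim: #|V| => [//|i IHi] /=.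
apply/subsetP=> v vX; move: (subsetP XF v vX); rewrite !inE (subsetP IHi v vX) => /andP[_].
case: (owner G v == a); last by move/subset_trans; apply.
by case: (attr_strategy v) => // w /(subsetP IHi).
Qed.

Definition core_graph := egraph G a W core attr_strategy.

Lemma core_graph_core x y : core_graph x y -> (x \in core) && (y \in core).
Proof. by case/and3P=> -> ->. Qed.

Lemma core_graph_alpha x y : x \in core -> owner G x == a -> attr_strategy x = Some y ->
  core_graph x y.
Proof.
move=> xY ova E; have [w E' wY] := core_alpha xY ova.
by rewrite /core_graph /egraph xY ova E eqxx andbT; move: E'; rewrite E => -[->].
Qed.

Lemma core_graph_opp x y : x \in core -> owner G x != a -> y \in succ G W x -> core_graph x y.
Proof.
move=> xY ova ys; rewrite /core_graph /egraph xY (subsetP (core_opp xY ova) y ys) (negbTE ova).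
by move: ys; rewrite inE => /andP[-> ->].
Qed.

Definition graph_closed (C : {set V}) := forall x y, x \in C -> core_graph x y -> y \in C.

Definition extracted := extract G a W attr_region attr_strategy.

Lemma extractedP C : C \in extracted ->
  [/\ exists2 u, u \in core & C = scc core_graph u, graph_closed C &
      exists2 x, x \in C & exists y, core_graph x y].
Proof.
rewrite inE => /and3P[/exists_inP[u uY /eqP ->] /forall_inP cl /exists_inP[x xC /existsP[y xy]]].
split; [by exists u | | by exists x => //; exists y].
by move=> x' y' /cl /forallP /(_ y') /implyP; apply.
Qed.

Lemma extracted_closed C : C \in extracted -> graph_closed C.
Proof. by case/extractedP. Qed.

Lemma extracted_core C : C \in extracted -> C \subset core.
Proof.
case/extractedP=> -[u uY ->] _ _; apply/subsetP=> w; rewrite inE => /andP[uw _].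
by apply: connect_invariant uw uY => x y _ /core_graph_core /andP[].
Qed.

Lemma extracted_sub C : C \in extracted -> C \subset W.
Proof. by move/extracted_core/subset_trans; apply; apply: subset_trans core_sub attr_region_sub. Qed.

Hypothesis W_total : subgame_total W.

Section ClosedPart.
Variable C : {set V}.
Hypothesis C_core : C \subset core.
Hypothesis C_closed : graph_closed C.

Lemma closed_avoid_std i : i < #|V| ->
  {in C, forall v, v \notin (attr_iter i).1} ->
  {in C, forall v, v \notin attr_std G a W (attr_iter i).1}.
Proof.
move=> lt_i CZ v vC; apply/negP => vN.
have vY := subsetP C_core v vC.
move: (vN); rewrite inE => /and3P[vW vZ]; case: ifP => ova.
- move=> ne; have := chP v ne; rewrite inE => /andP[_ wZ].
  have E : (attr_iter i.+1).2 v = Some (ch v (succ G W v :&: (attr_iter i).1)).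
    by rewrite attr_iter_strategyS (attr_iter_undef vZ) ova /= vN.
  by move: (C_closed vC (core_graph_alpha vY ova (attr_strategy_mono lt_i E))) => /CZ; rewrite wZ.
- move=> sub; have /set0Pn[w ws] := W_total vW.
  have := C_closed vC (core_graph_opp vY (negbT ova) ws).
  by move/CZ; rewrite (subsetP sub w ws).
Qed.

(* [tattr] gives a vertex the move of the first attracted tangle containing it,
   so on [tj :&: C] the strategy is the witness of [tj]; as [C] is closed and
   [tj] strongly connected under that witness, [tj] lies in [C]. *)
Lemma closed_first_tangle i (tj : {set V}) : i < #|V| ->
  {in C, forall v, v \notin (attr_iter i).1} ->
  [pick t | (t \in attr_tang G a W Tp (attr_iter i).1) && (t :&: C != set0)] = Some tj ->
  tj \subset C.
Proof.
move=> lt_i CZ Etj.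
set Ts := attr_tang G a W Tp (attr_iter i).1 in Etj.
have /andP[tjT /set0Pn[v0]] := pick_someP Etj; rewrite inE => /andP[v0tj v0C].
move: (tjT); rewrite inE => /andP[tjTp /and3P[odt _ _]].
have [_ _ tj_conn] := Tp_weak tjTp.
apply: (tj_conn C v0 v0tj v0C) => x y xC /and3P[xtj ytj].
have [xY xZ] := (subsetP C_core x xC, CZ x xC).
case: (boolP (owner G x == a)) => ova; last first.
  rewrite (eqP odt) (negbTE ova) => xy.
  by apply: C_closed xC (core_graph_opp xY ova _); rewrite inE (subsetP (TpW tjTp) y ytj) xy.
rewrite (eqP odt) ova => /eqP xy.
have [tk Etk] : exists tk, [pick t in Ts | x \in t] = Some tk.
  by case: pickP => [tk _|none]; [exists tk | have := none tj; rewrite /= tjT xtj].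
have /andP[tkT xtk] := pick_someP Etk.
have tjk : tj = tk.
  apply: (pick_cross Etj Etk); rewrite /= ?tkT ?tjT ?xtj //=.
  by apply/set0Pn; exists x; rewrite inE xtk xC.
have E : (attr_iter i.+1).2 x = Some y.
  rewrite attr_iter_strategyS (attr_iter_undef xZ) ova /=.
  by rewrite (negbTE (closed_avoid_std lt_i CZ xC)) Etk /= -tjk xy.
exact: C_closed xC (core_graph_alpha xY ova (attr_strategy_mono lt_i E)).
Qed.

Lemma closed_avoid_tang i : i < #|V| ->
  {in C, forall v, v \notin (attr_iter i).1} ->
  forall t, t \in attr_tang G a W Tp (attr_iter i).1 -> t :&: C = set0.
Proof.
move=> lt_i CZ t0 t0T; apply/eqP; apply: contraT => t0C.
have [tj Etj] : exists tj,
    [pick t | (t \in attr_tang G a W Tp (attr_iter i).1) && (t :&: C != set0)] = Some tj.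
  by case: pickP => [tj _|none]; [exists tj | have := none t0; rewrite t0T t0C].
have tjC := closed_first_tangle lt_i CZ Etj.
have /andP[+ _] := pick_someP Etj; rewrite inE => /andP[_ /and3P[odt /set0Pn[e eE] esc]].
move: (eE); rewrite inE => /andP[eW /andP[_ /exists_inP[u utj /andP[ou eu]]]].
have uC := subsetP tjC u utj.
have ova : owner G u != a by rewrite -(eqP odt).
have es : e \in succ G W u by rewrite inE eW eu.
have := C_closed uC (core_graph_opp (subsetP C_core u uC) ova es).
by move/CZ; rewrite (subsetP esc e eE).
Qed.

Lemma closed_avoid_step i : i < #|V| ->
  {in C, forall v, v \notin (attr_iter i).1} -> {in C, forall v, v \notin (attr_iter i.+1).1}.
Proof.
move=> lt_i CZ v vC; rewrite attr_iter_regionS; apply/negP.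
case/setUP=> [/setUP[|]|/bigcupP[t tT vt]].
- exact/negP/CZ.
- exact/negP/(closed_avoid_std lt_i CZ vC).
- by have := closed_avoid_tang lt_i CZ tT; move/setP/(_ v); rewrite !inE vt vC.
Qed.

(* A closed part of the core is never entered by the attractor, unless it
   contains a vertex of [A]. *)
Lemma closed_meets_top : C != set0 ->
  exists2 v, v \in C & v \in A.
Proof.
move=> /set0Pn[v0 v0C].
case: (boolP [exists v in C, v \in A]) => [/exists_inP[v]|noA]; first by exists v.
have avoid i : i <= #|V| -> {in C, forall v, v \notin (attr_iter i).1}.
  elim: i => [_ v vC|i IHi lt_i]; last exact: closed_avoid_step lt_i (IHi (ltnW lt_i)).
  by apply: contra noA => vA; apply/exists_inP; exists v.
have := avoid _ (leqnn _) v0 v0C.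
by rewrite -attr_regionE (subsetP core_sub) ?(subsetP C_core).
Qed.

End ClosedPart.

Lemma subgame_total_attr_compl : subgame_total (W :\: attr_region).
Proof.
move=> v; rewrite inE => /andP[vZ vW].
suff [w ws wZ] : exists2 w, w \in succ G W v & w \notin attr_region.
  by apply/set0Pn; exists w; move: ws; rewrite !inE wZ => /andP[-> ->].
have := attr_region_std vW vZ; case: ifP => _; last by case/subsetPn=> w; exists w.
move=> /eqP/setP noZ; have /set0Pn[w ws] := W_total vW.
exists w => //; apply/negP => wZ.
by move: (noZ w); rewrite in_setI ws wZ in_set0.
Qed.

Lemma core_full : attr_region = W -> core = attr_region.
Proof.
move=> ZW; apply/eqP; rewrite eqEsubset core_sub core_greatest //.
apply/subsetP=> v vZ; rewrite inE vZ /=.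
case: ifP => ova; last by rewrite ZW; apply/subsetP=> w; rewrite inE => /andP[].
have ne : succ G W v :&: attr_region != set0.
  rewrite ZW (setIidPl _); first by apply: W_total; rewrite -ZW.
  by apply/subsetP=> w; rewrite inE => /andP[].
have vZi : v \in (attr_iter #|V|).1 by rewrite -attr_regionE.
case: (attr_iter_strategy vZi ova) => [[w E wZ]|[vA E]].
  by rewrite (attr_strategy_mono (leqnn _) E) attr_regionE.
by rewrite attr_strategyE E vA ova ne /=; have := chP v ne; rewrite inE => /andP[].
Qed.

Lemma extracted_nonempty : W != set0 -> attr_region = W -> extracted != set0.
Proof.
move=> /set0Pn[u0 u0W] ZW; have coreW := core_full ZW.
have u0Y : u0 \in core by rewrite coreW ZW.
have closedY x y : x \in core -> core_graph x y -> y \in core by move=> _ /core_graph_core/andP[].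
have [u uY bottom] := bottom_scc_exists u0Y closedY.
apply/set0Pn; exists (scc core_graph u); rewrite inE; apply/and3P; split.
- by apply/exists_inP; exists u.
- apply/forall_inP=> x; rewrite inE => /andP[ux _]; apply/forallP=> y; apply/implyP=> xy.
  have uy := connect_trans ux (connect1 xy).
  by rewrite inE uy bottom.
- apply/exists_inP; exists u; first by rewrite inE connect0.
  apply/existsP; case: (boolP (owner G u == a)) => ova.
    by have [w E _] := core_alpha uY ova; exists w; apply: core_graph_alpha.
  have /set0Pn[w ws] : succ G W u != set0 by apply: W_total; rewrite -ZW -coreW.
  by exists w; apply: core_graph_opp.
Qed.

Lemma extracted_trivI : trivIset extracted.
Proof.
apply/trivIsetP=> C1 C2 /extractedP[[u1 _ ->] _ _] /extractedP[[u2 _ ->] _ _].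
apply: contraR; rewrite -setI_eq0 => /set0Pn[x]; rewrite inE => /andP[x1 x2].
by rewrite (scc_mem_eq x1) (scc_mem_eq x2).
Qed.

Hypothesis A_top :
  forall v, v \in A -> odd (prio G v) = a /\ (forall w, w \in W -> prio G w <= prio G v).

Lemma extracted_parity C : C \in extracted -> odd (maxpr G C) = a.
Proof.
move=> CE; have [_ Ccl [x xC _]] := extractedP CE.
have [v vC vA] : exists2 v, v \in C & v \in A.
  by apply: closed_meets_top (extracted_core CE) Ccl _; apply/set0Pn; exists x.
have [<- top] := A_top vA.
by rewrite (maxpr_eq vC) // => w /(subsetP (extracted_sub CE)) /top.
Qed.

Lemma extracted_escapes C : C \in extracted -> escapes G W C = set0.
Proof.
move=> CE; apply/eqP/set0Pn=> -[e]; rewrite inE => /andP[eW /andP[eC]].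
case/exists_inP=> u uC; rewrite (extracted_parity CE) => /andP[ou eu].
have es : e \in succ G W u by rewrite inE eW eu.
have := extracted_closed CE uC (core_graph_opp (subsetP (extracted_core CE) u uC) ou es).
by rewrite (negbTE eC).
Qed.

Lemma extracted_weak C : C \in extracted -> weak_tangle C attr_strategy.
Proof.
move=> CE; have [[u _ Cu] Ccl [x xC _]] := extractedP CE.
have par := extracted_parity CE.
split.
- by apply/set0Pn; exists x.
- move=> v vC; rewrite par => ova; have vY := subsetP (extracted_core CE) v vC.
  have [w E _] := core_alpha vY ova; exists w => //.
  exact: Ccl vC (core_graph_alpha vY ova E).
- move=> S v vC vS Scl; apply/subsetP=> y yC.
  have vy : connect core_graph v y.
    by move: vC yC; rewrite Cu !inE => /andP[_ vu] /andP[uy _]; apply: connect_trans vu uy.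
  have inv z z' : (z \in C) && (z \in S) -> core_graph z z' -> (z' \in C) && (z' \in S).
    move=> /andP[zC zS] zz'; have z'C := Ccl _ _ zC zz'.
    rewrite z'C; apply: Scl zS _; rewrite /tangle_graph zC z'C par.
    by move: zz' => /and3P[_ _]; case: (owner G z == a) => // /andP[].
  by have /andP[] := connect_invariant inv vy (introT andP (conj vC vS)).
Qed.

End TangleAttractor.

(** * Costs of the basic operations *)

Section Cost.
Variables (V : finType) (G : game V).

Definition game_size := #|V| + nedges G setT.

Lemma nedgesE : nedges G setT = \sum_u #|succ G setT u|.
Proof.
rewrite /nedges -sum1_card.
transitivity (\sum_u \sum_(w in succ G setT u) 1).
  by rewrite pair_big_dep; apply: eq_bigl => -[u w] /=; rewrite !inE.
by apply: eq_bigr => u _; rewrite sum1_card.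
Qed.

Lemma succ_card_le (W : {set V}) u : #|succ G W u| <= #|succ G setT u|.
Proof. by apply: subset_leq_card; apply/subsetP=> w; rewrite !inE => /andP[_ ->]. Qed.

Lemma sum_succ_le (S W : {set V}) : \sum_(u in S) #|succ G W u| <= nedges G setT.
Proof.
rewrite nedgesE; apply: leq_trans (_ : _ <= \sum_(u in S) #|succ G setT u|) _.
  by apply: leq_sum => u _; apply: succ_card_le.
by rewrite [X in _ <= X](bigID (mem S)) /= leq_addr.
Qed.

Lemma nedges_le (W : {set V}) : nedges G W <= nedges G setT.
Proof.
apply: subset_leq_card; apply/subsetP=> p.
by rewrite !inE => /andP[/andP[_ _] ->]; rewrite andbT.
Qed.

Lemma nedges_ge : game_total G -> #|V| <= nedges G setT.
Proof.
move=> Gtot; rewrite nedgesE -sum1_card; apply: leq_sum => u _.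
by rewrite card_gt0; have [w uw] := Gtot u; apply/set0Pn; exists w; rewrite !inE uw.
Qed.

Lemma nedges_le_sq : nedges G setT <= #|V| ^ 2.
Proof. by rewrite nedgesE expnS expn1 -sum_nat_const; apply: leq_sum => u _; apply: max_card. Qed.

Lemma tattr_cost_le (W : {set V}) (Tp : {set {set V}}) :
  tattr_cost G W Tp <= #|Tp|.+1 * game_size.
Proof.
rewrite /tattr_cost mulSn leq_add ?leq_add ?max_card ?nedges_le //.
by rewrite -sum_nat_const leq_sum // => t _; rewrite leq_add ?max_card ?sum_succ_le.
Qed.

Lemma extract_cost_le (W : {set V}) : extract_cost G W <= game_size.
Proof. by rewrite leq_add ?max_card ?nedges_le. Qed.

(* Disjoint tangles: their escape checks visit every vertex and edge at most once. *)
Lemma esc_cost_le (Wg : {set V}) (A : {set {set V}}) :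
  trivIset A -> esc_cost G Wg A <= game_size.
Proof.
move=> trivA; rewrite /esc_cost.
under eq_bigr => t _ do rewrite -sum1_card -big_split /=.
rewrite -(@big_trivIset _ _ _ _ A (fun u => 1 + #|succ G Wg u|) trivA) /=.
apply: leq_trans (_ : _ <= \sum_u (1 + #|succ G Wg u|)) _.
  by rewrite [X in _ <= X](bigID (mem (cover A))) /= leq_addr.
by rewrite big_split /= sum_nat_const muln1 leq_add // nedgesE leq_sum // => u _; apply: succ_card_le.
Qed.

Lemma merge_cost_le (Y : {set {set V}}) : merge_cost Y <= #|Y| * #|V|.
Proof. by rewrite /merge_cost -sum_nat_const; apply: leq_sum => t _; apply: max_card. Qed.

End Cost.

(** * Sweeps *)

Lemma escapes_restrict (V : finType) (G : game V) (W1 W2 t : {set V}) :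
  W1 \subset W2 -> escapes G W1 t = W1 :&: escapes G W2 t.
Proof.
move=> W12; apply/setP=> x; rewrite !inE.
by case: (boolP (x \in W1)) => //= /(subsetP W12) ->.
Qed.

Lemma leq_sweep_cost c x p b K c' :
  x <= K -> p < b -> c' <= c + x + p * K -> c' <= c + b * K.
Proof.
move=> xK pb /leq_trans; apply; rewrite -addnA leq_add2l.
by apply: leq_trans (leq_add xK (leqnn _)) _; rewrite -mulSn leq_mul2r pb orbT.
Qed.

Definition sres_tangles (V : finType) (r : sres V) :=
  match r with SDom Y _ _ _ | SDone Y _ _ => Y end.
Definition sres_wit (V : finType) (r : sres V) :=
  match r with SDom _ w _ _ | SDone _ w _ => w end.
Definition sres_cost (V : finType) (r : sres V) :=
  match r with SDom _ _ _ c | SDone _ _ c => c end.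

Section Sweep.
Variables (V : finType) (G : game V) (ch : V -> {set V} -> V) (chT : {set {set V}} -> {set V}).
Hypothesis chP : forall v S, S != set0 -> ch v S \in S.
Hypothesis chTP : forall D, D != set0 -> chT D \in D.

Definition weak_tangles (T : {set {set V}}) (wit : {set V} -> strat V) :=
  forall t, t \in T -> weak_tangle G t (wit t).

Variables (Wg : {set V}) (T : {set {set V}}) (wit : {set V} -> strat V).
Hypothesis T_weak : weak_tangles T wit.

(* [dom] is dom(r) of the paper.  The invariant is why a sweep that removes
   every vertex learns a tangle that was not known. *)
Definition sweep_inv (dom : {set V}) := forall t, t \in T ->
  t \subset Wg :\: dom -> escapes G Wg t \subset dom -> escapes G Wg t = set0.

Definition round_T (W' : {set V}) := [set t in T | t \subset W'].
Definition round_player (W' : {set V}) := odd (maxpr G W').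
Definition round_top (W' : {set V}) := [set v in W' | prio G v == maxpr G W'].
Definition round_region (W' : {set V}) :=
  attr_region G ch (round_player W') W' (round_T W') wit (round_top W').
Definition round_strategy (W' : {set V}) :=
  attr_strategy G ch (round_player W') W' (round_T W') wit (round_top W').
Definition round_tangles (W' : {set V}) :=
  extracted G ch (round_player W') W' (round_T W') wit (round_top W').
Definition round_cost (W' : {set V}) :=
  tattr_cost G W' (round_T W') + extract_cost G W' + esc_cost G Wg (round_tangles W').

Lemma sweepS k dom Y witY c : sweep G ch chT k.+1 Wg T wit dom Y witY c =
  if Wg :\: dom == set0 then Some (SDone Y witY c) else
  let W' := Wg :\: dom in
  let D := [set t in round_tangles W' | escapes G Wg t == set0] in
  if D != set0 then Some (SDom Y witY (chT D) (c + round_cost W'))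
  else sweep G ch chT k Wg T wit (dom :|: round_region W') (Y :|: round_tangles W')
         (upd_wit witY (round_tangles W') (round_strategy W')) (c + round_cost W').
Proof. by rewrite /= tattrE /round_cost !addnA. Qed.

Section Round.
Variable dom : {set V}.
Local Notation W' := (Wg :\: dom).
Hypothesis W'_total : subgame_total G W'.
Hypothesis W'_ne : W' != set0.

Lemma round_T_sub t : t \in round_T W' -> t \subset W'.
Proof. by rewrite inE => /andP[]. Qed.

Lemma round_top_sub : round_top W' \subset W'.
Proof. by apply/subsetP=> v; rewrite inE => /andP[]. Qed.

Lemma round_T_weak t : t \in round_T W' -> weak_tangle G t (wit t).
Proof. by rewrite inE => /andP[/T_weak]. Qed.

Lemma round_top_max v : v \in round_top W' ->
  odd (prio G v) = round_player W' /\ (forall w, w \in W' -> prio G w <= prio G v).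
Proof. by rewrite inE => /andP[_ /eqP ->]; split=> // w; apply: maxpr_ge. Qed.

Lemma round_region_sub : round_region W' \subset W'.
Proof. exact: attr_region_sub round_T_sub round_top_sub. Qed.

Lemma round_top_region : round_top W' \subset round_region W'.
Proof. exact: attr_region_top. Qed.

Lemma round_tangles_sub t : t \in round_tangles W' -> t \subset Wg.
Proof. by move/(extracted_sub round_T_sub round_top_sub)/subset_trans; apply; apply: subsetDl. Qed.

Lemma round_tangles_weak t : t \in round_tangles W' -> weak_tangle G t (round_strategy W').
Proof.
exact: (extracted_weak chP round_T_sub round_top_sub round_T_weak W'_total round_top_max).
Qed.

Lemma round_tangles_escapes t : t \in round_tangles W' -> escapes G W' t = set0.
Proof.
exact: (extracted_escapes chP round_T_sub round_top_sub round_T_weak W'_total round_top_max).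
Qed.

Lemma round_cost_le : round_cost W' <= #|T|.+3 * game_size G.
Proof.
have le_T : #|round_T W'| <= #|T| by apply/subset_leq_card/subsetP=> t; rewrite inE => /andP[].
have trivA := extracted_trivI G ch (round_player W') W' (round_T W') wit (round_top W').
apply: leq_trans (_ : _ <= #|round_T W'|.+1 * game_size G + game_size G + game_size G) _.
  by rewrite leq_add ?esc_cost_le // leq_add ?tattr_cost_le ?extract_cost_le.
by rewrite -!mulSnr leq_mul2r !ltnS le_T orbT.
Qed.

Lemma round_remaining : Wg :\: (dom :|: round_region W') = W' :\: round_region W'.
Proof. by rewrite setDDl. Qed.

Lemma round_remaining_total : subgame_total G (Wg :\: (dom :|: round_region W')).
Proof. by rewrite round_remaining; apply: subgame_total_attr_compl. Qed.

Lemma round_top_ex : exists2 v, v \in round_top W' & v \in W'.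
Proof.
by have [v vW pv] := maxpr_attained G W'_ne; exists v => //; rewrite inE vW pv eqxx.
Qed.

Lemma round_remaining_lt : #|Wg :\: (dom :|: round_region W')| < #|W'|.
Proof.
rewrite round_remaining; apply: attr_compl_lt round_top_sub _.
by have [v vtop _] := round_top_ex; apply/set0Pn; exists v.
Qed.

Lemma round_remaining_prio v :
  v \in Wg :\: (dom :|: round_region W') -> prio G v < maxpr G W'.
Proof.
rewrite round_remaining in_setD => /andP[vZ vW]; rewrite ltn_neqAle maxpr_ge // andbT.
by apply: contra vZ => /eqP pv; apply: (subsetP round_top_region); rewrite inE vW pv eqxx.
Qed.

Lemma round_inv : sweep_inv dom -> sweep_inv (dom :|: round_region W').
Proof.
move=> inv t tT; rewrite round_remaining => tsub esub.
have tW' : t \subset W' := subset_trans tsub (subsetDl _ _).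
have [e0|/set0Pn[e]] := eqVneq (escapes G Wg t :&: round_region W') set0.
  apply: inv tT tW' _; apply/subsetP=> x xE; move: (subsetP esub x xE).
  by rewrite in_setU => /orP[//|xZ]; move/setP: e0 => /(_ x); rewrite in_setI xE xZ in_set0.
rewrite in_setI => /andP[eE eZ]; exfalso.
move: (eE); rewrite inE => /andP[eWg /andP[et /exists_inP[u ut /andP[ou eu]]]].
have /setDP[uW' uZ] := subsetP tsub u ut.
have eW' := subsetP round_region_sub e eZ.
have := attr_region_std uW' uZ; case: ifP => oua.
  by move/eqP/setP/(_ e); rewrite in_setI in_set0 eZ andbT inE eW' eu.
move=> _; have odt : odd (maxpr G t) == round_player W'.
  by move: ou (negbT oua); case: (owner G u); case: (odd _); case: (round_player W').
have esc_W' : escapes G W' t = W' :&: escapes G Wg t by apply: escapes_restrict; apply: subsetDl.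
have tT' : t \in round_T W' by rewrite inE tT tW'.
have esc_ne : escapes G W' t != set0 by apply/set0Pn; exists e; rewrite esc_W' inE eW' eE.
have esc_sub : escapes G W' t \subset round_region W'.
  apply/subsetP=> x; rewrite esc_W' inE => /andP[xW' xE].
  by move: (subsetP esub x xE); rewrite in_setU (negbTE (setDP xW').2).
have := subsetP (attr_region_tangle tT' odt esc_ne esc_sub) u ut.
by rewrite (negbTE uZ).
Qed.

Lemma round_tangle_new t : sweep_inv dom -> t \in round_tangles W' ->
  escapes G Wg t != set0 -> t \notin T.
Proof.
move=> inv tA esc_ne; apply/negP=> tT; move/negP: esc_ne; apply; apply/eqP.
have tW' := extracted_sub round_T_sub round_top_sub tA.
apply: inv tT tW' _; apply/subsetP=> x xE; apply: contraT => xd.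
have xWg : x \in Wg by move: xE; rewrite inE => /andP[].
have : x \in escapes G W' t.
  by rewrite (escapes_restrict _ _ (subsetDl Wg dom)) in_setI xE in_setD xd xWg.
by rewrite (round_tangles_escapes tA) inE.
Qed.

Lemma round_tangles_full : round_region W' = W' -> round_tangles W' != set0.
Proof. exact: (extracted_nonempty chP round_T_weak W'_total W'_ne). Qed.

End Round.

Definition sweep_progress (dom : {set V}) (r : sres V) :=
  match r with
  | SDom _ _ t _ => t != set0 /\ t \subset Wg
  | SDone Y' _ _ => Wg :\: dom != set0 -> exists2 t, t \in Y' & t \notin T
  end.

Definition sweep_spec (dom : {set V}) (Y : {set {set V}}) (c b : nat) (r : sres V) :=
  [/\ Y \subset sres_tangles r, weak_tangles (sres_tangles r) (sres_wit r),
      {in sres_tangles r, forall t : {set V}, t \subset Wg},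
      sres_cost r <= c + b * (#|T|.+3 * game_size G) & sweep_progress dom r].

Lemma sweep_correct k dom Y witY c b :
  subgame_total G (Wg :\: dom) -> sweep_inv dom -> weak_tangles Y witY ->
  {in Y, forall t : {set V}, t \subset Wg} -> #|Wg :\: dom| < k ->
  {in Wg :\: dom, forall v, prio G v < b} ->
  exists2 r, sweep G ch chT k Wg T wit dom Y witY c = Some r & sweep_spec dom Y c b r.
Proof.
elim: k dom Y witY c b => [//|k IHk] dom Y witY c b W'tot inv Yweak YWg lt_k prio_b.
rewrite sweepS; have [W'0|W'ne] := eqVneq (Wg :\: dom) set0.
  by exists (SDone Y witY c) => //; split=> //=; rewrite ?leq_addr ?W'0 ?eqxx.
have [v /setIdP[vW /eqP pv] _] := round_top_ex W'ne.
have lt_b : maxpr G (Wg :\: dom) < b by rewrite -pv; apply: prio_b.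
have cost := round_cost_le dom.
rewrite /=; case: ifP => [Dne|/negbT/negPn D0].
  have /setIdP[tA _] := chTP Dne.
  have [tne _ _] := round_tangles_weak W'tot tA.
  eexists; first by []; split=> //=.
  - exact: leq_sweep_cost cost lt_b (leq_addr _ _).
  - by split=> //; apply: round_tangles_sub tA.
have Aweak : weak_tangles (Y :|: round_tangles (Wg :\: dom))
    (upd_wit witY (round_tangles (Wg :\: dom)) (round_strategy (Wg :\: dom))).
  move=> t tYA; rewrite /upd_wit; case: ifP => tA; first exact: (round_tangles_weak W'tot tA).
  by apply: Yweak; move: tYA; rewrite in_setU tA orbF.
have AWg : {in Y :|: round_tangles (Wg :\: dom), forall t : {set V}, t \subset Wg}.
  by move=> t /setUP[/YWg|/round_tangles_sub].
have [r Er [s1 s2 s3 s4 s5]] := IHk _ _ _ (c + round_cost (Wg :\: dom)) _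
    (round_remaining_total W'tot) (round_inv inv) Aweak AWg
    (leq_trans (round_remaining_lt W'ne) (ltnSE lt_k)) (@round_remaining_prio dom).
exists r => //; split.
- exact: subset_trans (subsetUl Y (round_tangles (Wg :\: dom))) s1.
- exact: s2.
- exact: s3.
- exact: leq_sweep_cost cost lt_b s4.
case: r {Er s2 s3 s4} s1 s5 => //= Y' w' c' s1 s5 _.
have [rem0|rem_ne] := eqVneq (Wg :\: (dom :|: round_region (Wg :\: dom))) set0; last exact: s5.
have full : round_region (Wg :\: dom) = Wg :\: dom.
  by apply/eqP; rewrite eqEsubset round_region_sub -setD_eq0 -round_remaining rem0 eqxx.
have /set0Pn[t tA] := round_tangles_full W'tot W'ne full.
exists t; first by apply: (subsetP s1); rewrite inE tA orbT.
apply: (round_tangle_new W'tot inv tA); apply: contraTneq D0 => esc0.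
by apply/set0Pn; exists t; rewrite inE tA esc0 eqxx.
Qed.

End Sweep.

(** * Search and solve *)

(* [search] and [solve] are analysed by amortization against the potential
   [R * #|learned|], [R] bounding the cost of one pass. *)
Lemma potential_last c x R a b : x <= R -> a <= b -> c + x + R * a <= c + R * b + R.
Proof.
move=> xR ab; have : R * a <= R * b by rewrite leq_mul2l ab orbT.
lia.
Qed.

Lemma potential_step c c' x z R a b :
  x <= R -> a < b -> c' + R * b <= c + x + z + R -> c' + R * a <= c + z + R.
Proof.
move=> xR ab; have : R * a + R <= R * b by rewrite addnC -mulnS leq_mul2l ab orbT.
lia.
Qed.

Lemma fuel_step n N a b k : a < b -> b <= N -> n + (N - a) < k.+1 -> n + (N - b) < k.
Proof. lia. Qed.

Section Search.
Variables (V : finType) (G : game V) (ch : V -> {set V} -> V) (chT : {set {set V}} -> {set V}).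
Hypothesis chP : forall v S, S != set0 -> ch v S \in S.
Hypothesis chTP : forall D, D != set0 -> chT D \in D.
Variables (Wg : {set V}) (d : nat).
Hypothesis Wg_total : subgame_total G Wg.
Hypothesis Wg_ne : Wg != set0.
Hypothesis prio_d : {in Wg, forall v, prio G v < d}.

(* Cost of one sweep of [search] plus merging what it learned, once the number
   of known tangles is at most [l]. *)
Definition pass_bound l := d * (l.+3 * game_size G) + l * #|V|.

Lemma pass_cost_le (T Y learned : {set {set V}}) c1 l :
  c1 <= d * (#|T|.+3 * game_size G) -> T \subset learned -> #|learned :|: Y| <= l ->
  c1 + merge_cost Y <= pass_bound l.
Proof.
move=> c1T Tl le_l; apply: leq_add.
  apply: leq_trans c1T _; rewrite leq_mul2l leq_mul2r !ltnS.
  by rewrite (leq_trans (subset_leq_card Tl)) ?orbT // (leq_trans _ le_l) ?subset_leq_card ?subsetUl.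
apply: leq_trans (merge_cost_le Y) _; rewrite leq_mul2r (leq_trans _ le_l) ?orbT //.
by rewrite subset_leq_card ?subsetUr.
Qed.

Lemma merge_known (T learned Y : {set {set V}}) :
  T = [set t in learned | t \subset Wg] -> {in Y, forall t : {set V}, t \subset Wg} ->
  T :|: Y = [set t in learned :|: Y | t \subset Wg].
Proof.
move=> -> YWg; apply/setP=> t; rewrite !inE.
by case: (boolP (t \in Y)) => tY; rewrite ?orbT ?(YWg t tY) ?orbF.
Qed.

Lemma weak_tangles_merge (T Y : {set {set V}}) wit witY :
  weak_tangles G T wit -> weak_tangles G Y witY ->
  weak_tangles G (T :|: Y) (fun t => if t \in T then wit t else witY t).
Proof. by move=> Tw Yw t; rewrite in_setU; case: ifP => [tT _|_ /= tY]; [apply: Tw | apply: Yw]. Qed.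

Definition search_spec (c : nat) (learned : {set {set V}})
  (res : {set {set V}} * ({set V} -> strat V) * {set V} * nat * {set {set V}}) :=
  let: (T1, wit1, dm, c1, l1) := res in
  [/\ learned \subset l1, T1 = [set t in l1 | t \subset Wg], weak_tangles G T1 wit1,
      dm != set0 /\ dm \subset Wg &
      forall l, #|l1| <= l ->
        c1 + pass_bound l * #|learned| <= c + pass_bound l * #|l1| + pass_bound l].

Lemma searchS k (T : {set {set V}}) wit c (learned : {set {set V}}) :
  search G ch chT k.+1 Wg T wit c learned =
  match sweep G ch chT k.+1 Wg T wit set0 set0 (fun _ _ => None) 0 with
  | None => None
  | Some (SDom Y witY t c1) =>
      let: (T2, wit2) := Defs.merge T wit Y witY in
      Some (T2, wit2, t, c + c1 + merge_cost Y, learned :|: Y)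
  | Some (SDone Y witY c1) =>
      let: (T2, wit2) := Defs.merge T wit Y witY in
      search G ch chT k Wg T2 wit2 (c + c1 + merge_cost Y) (learned :|: Y)
  end.
Proof. by []. Qed.

(* Every sweep that finds no dominion learns a new tangle, so the fuel needed
   decreases with the number of tangles not yet learned. *)
Lemma search_correct k (T : {set {set V}}) wit c (learned : {set {set V}}) :
  T = [set t in learned | t \subset Wg] -> weak_tangles G T wit ->
  #|V| + (#|{set V}| - #|learned|) < k ->
  exists2 res, search G ch chT k Wg T wit c learned = Some res & search_spec c learned res.
Proof.
elim: k T wit c learned => [//|k IHk] T wit c learned TL Tweak fuel.
have Tl : T \subset learned by rewrite TL; apply/subsetP=> t; rewrite inE => /andP[].
have W0tot : subgame_total G (Wg :\: set0) by rewrite setD0.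
have inv0 : sweep_inv G Wg T set0 by move=> t _ _; rewrite subset0 => /eqP.
have weak0 : weak_tangles G set0 (fun _ _ => None) by move=> t; rewrite inE.
have sub0 : {in set0, forall t : {set V}, t \subset Wg} by move=> t; rewrite inE.
have lt_k : #|Wg :\: set0| < k.+1.
  by rewrite ltnS (leq_trans (max_card _)) // -ltnS (leq_trans _ fuel) // ltnS leq_addr.
have prio0 : {in Wg :\: set0, forall v, prio G v < d} by rewrite setD0.
have [r Er [s1 s2 s3 s4 s5]] := sweep_correct chP chTP Tweak 0 W0tot inv0 weak0 sub0 lt_k prio0.
rewrite searchS Er.
have mT := merge_known TL s3; have mW := weak_tangles_merge Tweak s2.
have pass l : #|learned :|: sres_tangles r| <= l ->
    sres_cost r + merge_cost (sres_tangles r) <= pass_bound l.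
  by apply: pass_cost_le Tl; rewrite add0n in s4.
case: r {Er s1 s4} s2 s3 s5 mT mW pass => [Y witY t c1|Y witY c1] /= _ YWg s5 mT mW pass.
  eexists; first by []; split=> //; first exact: subsetUl.
  move=> l le_l; rewrite -(addnA c).
  exact: potential_last (pass l le_l) (subset_leq_card (subsetUl _ _)).
have [t tY tT] : exists2 t, t \in Y & t \notin T by apply: s5; rewrite setD0.
have lt_learned : #|learned| < #|learned :|: Y|.
  rewrite (proper_card _) // properEneq subsetUl andbT.
  by apply: contraNneq tT => eqL; rewrite TL inE (YWg t tY) andbT eqL inE tY orbT.
have [res Eres spec] := IHk _ _ (c + c1 + merge_cost Y) (learned :|: Y) mT mW
  (fuel_step lt_learned (max_card _) fuel).
exists res => //; move: spec; case: res {Eres} => [[[[T1 wit1] dm] c0] l1] [q1 q2 q3 q4 q5].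
split=> //; first exact: subset_trans (subsetUl _ _) q1.
move=> l le_l; move: (q5 l le_l); rewrite -(addnA c).
exact: potential_step (pass l (leq_trans (subset_leq_card q1) le_l)) lt_learned.
Qed.

End Search.

Lemma potential_solve c c1 cost a R S x y z w w' :
  c1 + R * x <= c + R * y + R -> a + R <= S ->
  cost + R * y <= c1 + a + R * z + S * w' -> w' < w ->
  cost + R * x <= c + R * z + S * w.
Proof. by move=> h1 h2 h3 /(leq_mul (leqnn S)); rewrite mulnS; lia. Qed.

Section Solve.
Variables (V : finType) (G : game V) (ch : V -> {set V} -> V) (chT : {set {set V}} -> {set V}).
Hypothesis chP : forall v S, S != set0 -> ch v S \in S.
Hypothesis chTP : forall D, D != set0 -> chT D \in D.
Variable d : nat.
Hypothesis prio_d : forall v, prio G v < d.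

Definition step_bound l := pass_bound G d l + #|V| + nedges G setT + l * #|V|.

Lemma solve_loopS k (Wg : {set V}) T wit c learned :
  solve_loop G ch chT k.+1 Wg T wit c learned =
  if Wg == set0 then Some (c, learned) else
    match search G ch chT k.+1 Wg T wit c learned with
    | None => None
    | Some (T1, wit1, dm, c1, l1) =>
        let D := attr_region G ch (odd (maxpr G dm)) Wg set0 wit1 dm in
        solve_loop G ch chT k (Wg :\: D) [set t in T1 | t \subset Wg :\: D] wit1
          (c1 + #|Wg| + nedges G Wg + merge_cost T1) l1
    end.
Proof. by []. Qed.

Lemma solve_overhead_le (Wg : {set V}) (T1 l1 : {set {set V}}) l :
  T1 = [set t in l1 | t \subset Wg] -> #|l1| <= l ->
  #|Wg| + nedges G Wg + merge_cost T1 + pass_bound G d l <= step_bound l.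
Proof.
move=> T1l1 le_l; rewrite /step_bound addnC !addnA !leq_add ?max_card ?nedges_le //.
apply: leq_trans (merge_cost_le T1) _; rewrite leq_mul2r (leq_trans _ le_l) ?orbT //.
by rewrite T1l1 subset_leq_card //; apply/subsetP=> t; rewrite inE => /andP[].
Qed.

Definition solve_spec (Wg : {set V}) (c : nat) (learned : {set {set V}})
  (res : nat * {set {set V}}) :=
  let: (cost, Lf) := res in learned \subset Lf /\ forall l, #|Lf| <= l ->
    cost + pass_bound G d l * #|learned| <= c + pass_bound G d l * #|Lf| + step_bound l * #|Wg|.

Lemma solve_correct k (Wg : {set V}) (T : {set {set V}}) wit c (learned : {set {set V}}) :
  subgame_total G Wg -> T = [set t in learned | t \subset Wg] -> weak_tangles G T wit ->
  #|Wg| + #|V| + #|{set V}| < k ->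
  exists2 res, solve_loop G ch chT k Wg T wit c learned = Some res & solve_spec Wg c learned res.
Proof.
elim: k Wg T wit c learned => [//|k IHk] Wg T wit c learned Wtot TL Tweak fuel.
rewrite solve_loopS; have [W0|Wne] := eqVneq Wg set0.
  by exists (c, learned) => //; split=> // l _; rewrite W0 cards0 muln0 addn0.
have fuel' : #|V| + (#|{set V}| - #|learned|) < k.+1.
  by apply: leq_ltn_trans fuel; rewrite -addnA (leq_trans _ (leq_addl _ _)) // leq_add2l leq_subr.
have prio_Wg : {in Wg, forall v, prio G v < d} by move=> v _.
have [[[[[T1 wit1] dm] c1] l1] E1 [q1 q2 q3 [dne dsub] q5]] :=
  search_correct chP chTP Wtot Wne prio_Wg c TL Tweak fuel'.
rewrite E1 /=.
have Dtot := subgame_total_attr_compl (ch := ch) (a := odd (maxpr G dm)) (Tp := set0)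
  (wit := wit1) (A := dm) Wtot.
have lt_W : #|Wg :\: attr_region G ch (odd (maxpr G dm)) Wg set0 wit1 dm| < #|Wg|.
  exact: attr_compl_lt dsub dne.
move: (attr_region _ _ _ _ _ _ _) Dtot lt_W => D Dtot lt_W.
have TL' : [set t in T1 | t \subset Wg :\: D] = [set t in l1 | t \subset Wg :\: D].
  apply/setP=> t; rewrite q2 !inE; case: (boolP (t \subset Wg :\: D)) => tWD; rewrite ?andbF ?andbT //.
  by rewrite (subset_trans tWD (subsetDl _ _)) andbT.
have weak' : weak_tangles G [set t in T1 | t \subset Wg :\: D] wit1.
  by move=> t /setIdP[tT _]; apply: q3.
have fuel2 : #|Wg :\: D| + #|V| + #|{set V}| < k.
  by apply: leq_trans (ltnSE fuel); rewrite -!addnA ltn_add2r.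
have [[cost Lf] E2 [r1 r2]] :=
  IHk _ _ _ (c1 + #|Wg| + nedges G Wg + merge_cost T1) _ Dtot TL' weak' fuel2.
exists (cost, Lf) => //; split; first exact: subset_trans q1 r1.
move=> l le_l; have le_l1 : #|l1| <= l := leq_trans (subset_leq_card r1) le_l.
apply: potential_solve (q5 l le_l1) (solve_overhead_le q2 le_l1) _ lt_W.
by rewrite !addnA; apply: r2.
Qed.

End Solve.

Lemma final_bound n m d l : n <= m -> m <= n ^ 2 -> n <= d * n ->
  (d * (l.+3 * (n + m)) + l * n) * l + (d * (l.+3 * (n + m)) + l * n + n + m + l * n) * n
  <= 20 * (d * n * m * l.+1 + d * n ^ 2 * l.+1 ^ 2).
Proof.
rewrite expnS expn1 => nm mn2 dn.
have nn : n <= n * n by case: n {nm mn2 dn} => // n; rewrite leq_pmulr.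
have mmn : m <= m * n by case: n nm mn2 {dn nn} => [|n _ _]; [case: m | rewrite leq_pmulr].
have dnn : n * n <= d * n * n by rewrite leq_mul2r dn orbT.
have dmn : m * n <= d * m * n by rewrite -mulnA mulnCA leq_mul2l dn orbT.
have a1 : d * l * l * n <= d * l * l * (n * n) by rewrite leq_mul2l nn orbT.
have a2 : d * l * l * m <= d * l * l * (n * n) by rewrite leq_mul2l mn2 orbT.
have a3 : d * l * n <= d * l * (n * n) by rewrite leq_mul2l nn orbT.
have a4 : d * l * m <= d * l * (m * n) by rewrite leq_mul2l mmn orbT.
have a5 : l * l * (n * n) <= l * l * (d * n * n) by rewrite leq_mul2l dnn orbT.
have a6 : l * (n * n) <= l * (d * n * n) by rewrite leq_mul2l dnn orbT.
have a7 : l * l * n <= l * l * (n * n) by rewrite leq_mul2l nn orbT.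
lia.
Qed.

Theorem lemma13 :
  exists C : nat,
  forall (V : finType) (G : game V) (d : nat)
         (ch : V -> {set V} -> V) (chT : {set {set V}} -> {set V}),
    game_total G ->
    (forall v, prio G v < d) ->
    (forall v S, S != set0 -> ch v S \in S) ->
    (forall D, D != set0 -> chT D \in D) ->
    exists k cost learned,
      solve G ch chT k = Some (cost, learned) /\
      let n := #|V| in
      let m := nedges G setT in
      let L := #|learned|.+1 in
      cost <= C * (d * n * m * L + d * n ^ 2 * L ^ 2).
Proof.
exists 20 => V G d ch chT Gtot prio_d chP chTP.
have Wtot : subgame_total G setT.
  by move=> v _; have [w vw] := Gtot v; apply/set0Pn; exists w; rewrite !inE vw.
have T0 : set0 = [set t : {set V} in set0 | t \subset setT] by apply/setP=> t; rewrite !inE.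
have weak0 : weak_tangles G set0 (fun _ _ => None) by move=> t; rewrite inE.
have fuel : #|[set: V]| + #|V| + #|{set V}| < (#|V| + #|V| + #|{set V}|).+1 by rewrite cardsT.
have [[cost Lf] E [_ bound]] := solve_correct chP chTP prio_d 0 Wtot T0 weak0 fuel.
exists (#|V| + #|V| + #|{set V}|).+1, cost, Lf; split=> //=.
move: (bound _ (leqnn _)); rewrite cards0 muln0 addn0 add0n cardsT => /leq_trans; apply.
have dn : #|V| <= d * #|V|.
  case: (posnP #|V|) => [->|/card_gt0P[v _]] //.
  by rewrite leq_pmull // (leq_ltn_trans _ (prio_d v)).
exact: final_bound (nedges_ge Gtot) (nedges_le_sq G) dn.
Qed.
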